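(* Let the binary predicate symbols be $\mathcal F=\{f,g,h\}$ (with arbitrary unary symbols), and for a variable $x$ define $P_f(x):=\exists^{=1}y.f(x,y)\wedge\exists^{=0}y.(g(x,y)\vee h(x,y))$, $P_g(x):=\exists^{=1}y.g(x,y)\wedge\exists^{=0}y.(f(x,y)\vee h(x,y))$, and $P_{fg}(x):=\exists^{=1}y.f(x,y)\wedge\exists^{=1}y.g(x,y)\wedge\exists^{=0}y.h(x,y)$. Then (a) $P_{fg}\sim P_f*P_g$, and (b) $P_{fg}$ is not equivalent to any boolean combination of $P_f$ and $P_g$.
   Context: Environments: finite nonempty domain $D$, interpretations of unary predicates as subsets of $D$ and of $f,g,h$ as subsets of $D\times D$, and an assignment of elements to variables. $\exists^{=k}y.G$ means exactly $k$ elements $y$ satisfy $G$. $[\![G_1*G_2]\!]e$ holds iff there are environments $e_1,e_2$ with the same domain and variable assignment such that each predicate symbol's interpretation in $e$ is the disjoint union of its interpretations in $e_1,e_2$, and $G_1$ holds in $e_1$, $G_2$ in $e_2$. $G\sim H$ means equal truth values in all environments. *)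

From mathcomp Require Import all_boot.
Set Implicit Arguments. Unset Strict Implicit. Unset Printing Implicit Defensive.

(* Environments over a finite domain D (nonemptiness is a separate hypothesis),
   with unary predicate symbols indexed by U and variables indexed by V. *)
Record env (U V : Type) (D : finType) := Env {
  un : U -> {set D};
  rf : {set D * D};
  rg : {set D * D};
  rh : {set D * D};
  asg : V -> D
}.

Definition disj_union (T : finType) (A A1 A2 : {set T}) : Prop :=
  A = A1 :|: A2 /\ [disjoint A1 & A2].

(* Formulas with free variable x are represented by their semantics. *)
Definition sem (U V : Type) := forall D : finType, env U V D -> Prop.

Definition exk (D : finType) (k : nat) (G : pred D) : Prop := #|[set y | G y]| = k.

Section Props.
Variables (U V : Type) (x : V).

Definition P_f : sem U V := fun D e =>
  exk 1 (fun y => (asg e x, y) \in rf e) /\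
  exk 0 (fun y => ((asg e x, y) \in rg e) || ((asg e x, y) \in rh e)).

Definition P_g : sem U V := fun D e =>
  exk 1 (fun y => (asg e x, y) \in rg e) /\
  exk 0 (fun y => ((asg e x, y) \in rf e) || ((asg e x, y) \in rh e)).

Definition P_fg : sem U V := fun D e =>
  exk 1 (fun y => (asg e x, y) \in rf e) /\
  exk 1 (fun y => (asg e x, y) \in rg e) /\
  exk 0 (fun y => (asg e x, y) \in rh e).
End Props.

Definition star (U V : Type) (G1 G2 : sem U V) : sem U V := fun D e =>
  exists e1 e2 : env U V D,
    asg e1 = asg e /\ asg e2 = asg e /\
    (forall u, disj_union (un e u) (un e1 u) (un e2 u)) /\
    disj_union (rf e) (rf e1) (rf e2) /\
    disj_union (rg e) (rg e1) (rg e2) /\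
    disj_union (rh e) (rh e1) (rh e2) /\
    G1 D e1 /\ G2 D e2.

Definition fequiv (U V : Type) (G H : sem U V) : Prop :=
  forall (D : finType) (e : env U V D), 0 < #|D| -> (G D e <-> H D e).

Inductive bcomb := BA | BB | BTrue | BFalse | BNot of bcomb
  | BAnd of bcomb & bcomb | BOr of bcomb & bcomb.

Fixpoint bsem (U V : Type) (A B : sem U V) (c : bcomb) : sem U V :=
  match c with
  | BA => A
  | BB => B
  | BTrue => fun _ _ => True
  | BFalse => fun _ _ => False
  | BNot c => fun D e => ~ @bsem U V A B c D e
  | BAnd c1 c2 => fun D e => @bsem U V A B c1 D e /\ @bsem U V A B c2 D e
  | BOr c1 c2 => fun D e => @bsem U V A B c1 D e \/ @bsem U V A B c2 D e
  end.

From mathcomp Require Import all_boot.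
Set Implicit Arguments. Unset Strict Implicit. Unset Printing Implicit Defensive.

(* (a) An environment satisfying P_fg splits into one carrying f and one carrying g and h;
   conversely the three "exactly" counts on the x-row of a disjoint union are read off
   summand-wise, since each summand has an empty row for the relations it must avoid.
   (b) A boolean combination of P_f and P_g cannot distinguish two environments falsifying
   both, e.g. the one-point domain with f = g = {(x, x)} (satisfying P_fg) and the one with
   all relations empty (falsifying P_fg). *)

Lemma exk0P (D : finType) (G : pred D) : exk 0 G <-> G =1 xpred0.
Proof.
rewrite /exk; split=> [/eqP | G0].
- by rewrite cards_eq0 => /eqP/setP G0 y; have := G0 y; rewrite !inE.
- by apply/eqP; rewrite cards_eq0; apply/eqP/setP=> y; rewrite !inE G0.
Qed.

Lemma exk0_or (D : finType) (p q : pred D) :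
  exk 0 (fun y => p y || q y) <-> exk 0 p /\ exk 0 q.
Proof.
split=> [/exk0P pq0 | [/exk0P p0 /exk0P q0]]; last by apply/exk0P=> y; rewrite p0 q0.
by split; apply/exk0P=> y; have /= := pq0 y; case: (p y); case: (q y).
Qed.

Lemma exk_eq (D : finType) (k : nat) (G1 G2 : pred D) :
  G1 =1 G2 -> exk k G1 = exk k G2.
Proof. by move=> G12; rewrite /exk; congr (_ = _); apply: eq_card => y; rewrite !inE G12. Qed.

Section Rows.
Variables (T D : finType) (a : T) (A1 A2 : {set T * D}) (k : nat).

Lemma exk_rowUl : exk 0 (fun y => (a, y) \in A2) ->
  exk k (fun y => (a, y) \in A1 :|: A2) = exk k (fun y => (a, y) \in A1).
Proof. by move/exk0P=> A2a0; apply: exk_eq => y; rewrite inE A2a0 orbF. Qed.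

Lemma exk_rowUr : exk 0 (fun y => (a, y) \in A1) ->
  exk k (fun y => (a, y) \in A1 :|: A2) = exk k (fun y => (a, y) \in A2).
Proof. by move/exk0P=> A1a0; apply: exk_eq => y; rewrite inE A1a0. Qed.

End Rows.

Lemma exk_row0 (T D : finType) (a : T) (k : nat) :
  exk k (fun y : D => (a, y) \in set0) <-> k = 0.
Proof.
rewrite /exk; have -> : [set y : D | (a, y) \in set0] = set0 by apply/setP=> y; rewrite !inE.
by rewrite cards0; split.
Qed.

Lemma disj_union_setU0 (T : finType) (A : {set T}) : disj_union A A set0.
Proof. by split; [rewrite setU0 | rewrite -setI_eq0 setI0]. Qed.

Lemma disj_union_set0U (T : finType) (A : {set T}) : disj_union A set0 A.
Proof. by split; [rewrite set0U | rewrite -setI_eq0 set0I]. Qed.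

Section Separation.
Variables (U V : Type) (x : V) (D : finType) (e : env U V D).

Lemma P_fg_star : P_fg x e -> star (P_f x) (P_g x) e.
Proof.
case=> f1 [g1 h0].
exists (Env (un e) (rf e) set0 set0 (asg e)), (Env (fun=> set0) set0 (rg e) (rh e) (asg e)).
do 2!split=> //.
split=> [u|]; first exact: disj_union_setU0.
split; first exact: disj_union_setU0.
split; first exact: disj_union_set0U.
split; first exact: disj_union_set0U.
by split; split=> //; apply/exk0_or; split=> //; apply/exk_row0.
Qed.

Lemma star_P_fg : star (P_f x) (P_g x) e -> P_fg x e.
Proof.
case=> e1 [e2 [asg1 [asg2 [_ [[rfU _] [[rgU _] [[rhU _] [[f1 gh1] [g2 fh2]]]]]]]]].
move: gh1 fh2 => /exk0_or[g1 h1] /exk0_or[f2 h2].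
rewrite asg1 in f1 g1 h1; rewrite asg2 in g2 f2 h2.
by rewrite /P_fg rfU rgU rhU exk_rowUl // exk_rowUr // exk_rowUl.
Qed.

Lemma P_f_rowg : P_f x e -> forall y, (asg e x, y) \notin rg e.
Proof. by case=> _ /exk0_or[/exk0P g0 _] y; rewrite g0. Qed.

Lemma P_g_rowf : P_g x e -> forall y, (asg e x, y) \notin rf e.
Proof. by case=> _ /exk0_or[/exk0P f0 _] y; rewrite f0. Qed.

End Separation.

Lemma bsem_iff (U V : Type) (A B : sem U V) (D1 D2 : finType)
    (e1 : env U V D1) (e2 : env U V D2) :
  (A D1 e1 <-> A D2 e2) -> (B D1 e1 <-> B D2 e2) ->
  forall c, bsem A B c e1 <-> bsem A B c e2.
Proof. by move=> AE BE; elim=> //= [c IH | c1 IH1 c2 IH2 | c1 IH1 c2 IH2]; tauto. Qed.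

Section OnePoint.
Variables (U V : Type) (x : V).

Definition loop_env : env U V unit :=
  Env (fun=> set0) [set (tt, tt)] [set (tt, tt)] set0 (fun=> tt).

Definition empty_env : env U V unit :=
  Env (fun=> set0) set0 set0 set0 (fun=> tt).

Lemma exk_row_loop : exk 1 (fun y => (tt, y) \in [set (tt, tt)]).
Proof. by rewrite -card_unit /exk; apply: eq_card => -[]; rewrite !inE. Qed.

Lemma P_fg_loop : P_fg x loop_env.
Proof. by split; [|split]; [exact: exk_row_loop | exact: exk_row_loop | apply/exk_row0]. Qed.

Lemma not_P_fg_empty : ~ P_fg x empty_env.
Proof. by case=> /exk_row0. Qed.

Lemma not_P_f_loop : ~ P_f x loop_env.
Proof. by move=> fl; have := P_f_rowg fl tt; rewrite inE. Qed.

Lemma not_P_g_loop : ~ P_g x loop_env.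
Proof. by move=> gl; have := P_g_rowf gl tt; rewrite inE. Qed.

Lemma not_P_f_empty : ~ P_f x empty_env.
Proof. by case=> /exk_row0. Qed.

Lemma not_P_g_empty : ~ P_g x empty_env.
Proof. by case=> /exk_row0. Qed.

End OnePoint.

Theorem mainTheorem13 (U V : Type) (x : V) :
  @fequiv U V (@P_fg U V x) (@star U V (@P_f U V x) (@P_g U V x)) /\
  (forall c : bcomb,
     ~ @fequiv U V (@P_fg U V x) (@bsem U V (@P_f U V x) (@P_g U V x) c)).
Proof.
split=> [D e _ | c fg_c]; first by split; [exact: P_fg_star | exact: star_P_fg].
have unit_pos : 0 < #|{: unit}| by rewrite card_unit.
have c_loop_empty : bsem (P_f x) (P_g x) c (loop_env U V)
                    <-> bsem (P_f x) (P_g x) c (empty_env U V).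
  apply: bsem_iff.
  - by split=> fA; [case: (not_P_f_loop fA) | case: (not_P_f_empty fA)].
  - by split=> gA; [case: (not_P_g_loop gA) | case: (not_P_g_empty gA)].
apply: (@not_P_fg_empty U V x); apply/(fg_c _ _ unit_pos)/c_loop_empty.
exact/(fg_c _ _ unit_pos)/P_fg_loop.
Qed.
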